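(* Let $a,b>0$ with $a\neq2b$, $\eta\in(0,1]$, $T>0$ and $0<\tau\le T$. Let $d_T(t)=\frac1T\Theta(t)\Theta(T-t)$ be the density of a dark count uniformly distributed in the detection time window $[0,T]$, and define the coincidence probability of a photon detection and a dark count $$p_{\mathrm{ph\text{-}dc}}(T,\tau)=\iint_{|t_1-t_2|\le\tau}p_T(t_1)\,d_T(t_2)\,dt_1\,dt_2 .$$ Then $$p_{\mathrm{ph\text{-}dc}}(T,\tau)\frac{p_{\mathrm{det}}(T)}{\eta}=\frac{a}{2b(a-2b)T}\Big[1+2b\tau-e^{-2b\tau}+e^{-2bT}\big(1-2b\tau-e^{2b\tau}\big)\Big]-\frac{2b}{a(a-2b)T}\Big[1+a\tau-e^{-a\tau}+e^{-aT}\big(1-a\tau-e^{a\tau}\big)\Big].$$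
   Context: $\Theta$ is the Heaviside step function. The double-exponential photon state $(a,b)$ is the mixture over emission times $t_0$ with density $p_{\mathrm{em}}(t_0)=ae^{-at_0}\Theta(t_0)$ of pure photons with temporal wave function $\psi_{t_0}(t)=\sqrt{2b}\,e^{-b(t-t_0)}\Theta(t-t_0)$. For a detector of efficiency $\eta$, the detection-time density is $p(t)=\eta\int_0^\infty p_{\mathrm{em}}(t_0)|\psi_{t_0}(t)|^2dt_0$, $p_{\mathrm{det}}(T)=\int_0^Tp(t)\,dt$, and $p_T(t)=\Theta(t)\Theta(T-t)p(t)/p_{\mathrm{det}}(T)$ is the detection-time density conditioned on detection within $[0,T]$. *)

From Stdlib Require Import Reals Lra.
From Coquelicot Require Import Coquelicot.
Open Scope R_scope.

(* Heaviside step function (value at 0 irrelevant for the integrals). *)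
Definition Theta (x : R) : R := if Rle_dec 0 x then 1 else 0.

Definition p_em (a t0 : R) : R := a * exp (- a * t0) * Theta t0.

Definition psi (b t0 t : R) : R := sqrt (2 * b) * exp (- b * (t - t0)) * Theta (t - t0).

Definition p_dens (a b eta t : R) : R :=
  eta * RInt_gen (fun t0 => p_em a t0 * (Rabs (psi b t0 t)) ^ 2)
          (at_point 0) (Rbar_locally p_infty).

Definition p_det (a b eta T : R) : R := RInt (p_dens a b eta) 0 T.

Definition p_T (a b eta T t : R) : R :=
  Theta t * Theta (T - t) * p_dens a b eta t / p_det a b eta T.

Definition d_T (T t : R) : R := / T * Theta t * Theta (T - t).

Definition ind_close (tau t1 t2 : R) : R := if Rle_dec (Rabs (t1 - t2)) tau then 1 else 0.

(* p_{ph-dc}(T,tau) = double integral over R^2 (as iterated improper integrals)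
   of 1_{|t1-t2|<=tau} p_T(t1) d_T(t2) *)
Definition p_phdc (a b eta T tau : R) : R :=
  RInt_gen (fun t1 =>
     RInt_gen (fun t2 => ind_close tau t1 t2 * p_T a b eta T t1 * d_T T t2)
       (Rbar_locally m_infty) (Rbar_locally p_infty))
   (Rbar_locally m_infty) (Rbar_locally p_infty).

(* For t >= 0 the detection density is the convolution of the exponential emission
   profile with the photon intensity 2b e^{-2bt}, namely
   eta 2ab (e^{-at} - e^{-2bt}) / (2b - a).  Integrating out the uniform dark count
   leaves, for a photon detected at t in [0, T], the factor |[t - tau, t + tau] ∩ [0, T]| / T.
   This length is the ramp combination (t + tau) - (t - (T - tau))^+ - (t - tau)^+, so
   p_phdc p_det is a difference of the two elementary moments
   int_0^T e^{-kt} |[t - tau, t + tau] ∩ [0, T]| dt at k = a and k = 2b;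
   the normalisation p_det cancels since it is positive. *)

From Stdlib Require Import Reals Lra.
From Coquelicot Require Import Coquelicot.
Open Scope R_scope.

Lemma Theta_nonneg (x : R) : 0 <= x -> Theta x = 1.
Proof. intros Hx; unfold Theta; destruct (Rle_dec 0 x); lra. Qed.

Lemma Theta_neg (x : R) : x < 0 -> Theta x = 0.
Proof. intros Hx; unfold Theta; destruct (Rle_dec 0 x); lra. Qed.

Lemma is_RInt_vanishing (f : R -> R) (u v : R) :
  (forall x, Rmin u v < x < Rmax u v -> f x = 0) -> is_RInt f u v 0.
Proof.
  intros Hf.
  apply (is_RInt_ext (fun _ => 0)); [intros x Hx; symmetry; exact (Hf x Hx)|].
  pose proof (is_RInt_const (V := R_NormedModule) u v 0) as Hc.
  rewrite (scal_zero_r (V := R_NormedModule)) in Hc. exact Hc.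
Qed.

Lemma is_RInt_gen_vanishing_right (f : R -> R) (M : R) :
  (forall x, M < x -> f x = 0) ->
  is_RInt_gen f (at_point M) (Rbar_locally p_infty) 0.
Proof.
  intros Hf.
  apply (filterlimi_lim_ext_loc (fun _ => 0)); [|apply filterlim_const].
  exists (fun x => x = M) (fun y => M < y); [reflexivity | exists M; auto |].
  intros x y -> Hy. apply is_RInt_vanishing. intros z Hz; cbn in Hy, Hz.
  rewrite Rmin_left in Hz by lra. apply Hf; lra.
Qed.

Lemma is_RInt_gen_vanishing_left (f : R -> R) (M : R) :
  (forall x, x < M -> f x = 0) ->
  is_RInt_gen f (Rbar_locally m_infty) (at_point M) 0.
Proof.
  intros Hf.
  apply (filterlimi_lim_ext_loc (fun _ => 0)); [|apply filterlim_const].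
  exists (fun x => x < M) (fun y => y = M); [exists M; auto | reflexivity |].
  intros x y Hx ->. apply is_RInt_vanishing. intros z Hz; cbn in Hx, Hz.
  rewrite Rmax_right in Hz by lra. apply Hf; lra.
Qed.

Lemma is_RInt_gen_support_right (f : R -> R) (u M l : R) :
  (forall x, M < x -> f x = 0) -> is_RInt f u M l ->
  is_RInt_gen f (at_point u) (Rbar_locally p_infty) l.
Proof.
  intros Hf Hi. rewrite <- (plus_zero_r l).
  apply (is_RInt_gen_Chasles f M).
  - now apply is_RInt_gen_at_point.
  - now apply is_RInt_gen_vanishing_right.
Qed.

Lemma is_RInt_gen_compact_support (f : R -> R) (u v l : R) :
  (forall x, x < u -> f x = 0) -> (forall x, v < x -> f x = 0) ->
  is_RInt f u v l ->
  is_RInt_gen f (Rbar_locally m_infty) (Rbar_locally p_infty) l.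
Proof.
  intros Hu Hv Hi. rewrite <- (plus_zero_l l).
  apply (is_RInt_gen_Chasles f u).
  - now apply is_RInt_gen_vanishing_left.
  - now apply (is_RInt_gen_support_right f u v).
Qed.

Lemma exp_pow2 (x : R) : exp x ^ 2 = exp (2 * x).
Proof. simpl. rewrite Rmult_1_r, <- exp_plus. f_equal. ring. Qed.

Lemma exp_gap_div_pos (k m t : R) : k <> m -> 0 < t ->
  0 < (exp (- (k * t)) - exp (- (m * t))) / (m - k).
Proof.
  intros Hkm Ht. destruct (Rlt_or_le k m) as [Hlt | Hle].
  - assert (exp (- (m * t)) < exp (- (k * t))) by (apply exp_increasing; nra).
    apply Rdiv_lt_0_compat; lra.
  - assert (exp (- (k * t)) < exp (- (m * t))) by (apply exp_increasing; nra).
    replace ((exp (- (k * t)) - exp (- (m * t))) / (m - k))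
      with ((exp (- (m * t)) - exp (- (k * t))) / (k - m)) by (field; lra).
    apply Rdiv_lt_0_compat; lra.
Qed.

Lemma p_dens_closed (a b eta t : R) : 0 <= b -> a <> 2 * b -> 0 <= t ->
  p_dens a b eta t =
  eta * (2 * a * b) * ((exp (- (a * t)) - exp (- (2 * b * t))) / (2 * b - a)).
Proof.
  intros Hb Hab Ht. unfold p_dens. rewrite Rmult_assoc. f_equal.
  apply is_RInt_gen_unique, (is_RInt_gen_support_right _ 0 t).
  { intros s Hs. unfold psi. rewrite (Theta_neg (t - s)) by lra.
    rewrite Rmult_0_r, Rabs_R0. ring. }
  apply (is_RInt_ext (fun s => 2 * a * b * exp (- (a * s) - 2 * b * (t - s)))).
  { intros s Hs. rewrite Rmin_left, Rmax_right in Hs by lra.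
    unfold p_em, psi. rewrite !Theta_nonneg by lra.
    rewrite pow2_abs, !Rmult_1_r, Rpow_mult_distr, pow2_sqrt, exp_pow2 by lra.
    replace (- (a * s) - 2 * b * (t - s)) with (- a * s + 2 * (- b * (t - s))) by ring.
    rewrite exp_plus. simpl. ring. }
  set (G := fun s => 2 * a * b / (2 * b - a) * exp (- (a * s) - 2 * b * (t - s))).
  replace (2 * a * b * ((exp (- (a * t)) - exp (- (2 * b * t))) / (2 * b - a)))
    with (G t - G 0).
  2: { unfold G.
       replace (- (a * t) - 2 * b * (t - t)) with (- (a * t)) by ring.
       replace (- (a * 0) - 2 * b * (t - 0)) with (- (2 * b * t)) by ring.
       field. lra. }
  apply (is_RInt_derive (V := R_CompleteNormedModule)); intros s _.
  - unfold G. auto_derive; [easy | unfold Rminus; field; lra].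
  - apply (ex_derive_continuous (V := R_NormedModule)). auto_derive. easy.
Qed.

Lemma p_det_pos (a b eta T : R) : 0 < a -> 0 < b -> a <> 2 * b -> 0 < eta -> 0 < T ->
  0 < p_det a b eta T.
Proof.
  intros Ha Hb Hab Heta HT. unfold p_det.
  rewrite (RInt_ext _ (fun t => eta * (2 * a * b) *
             ((exp (- (a * t)) - exp (- (2 * b * t))) / (2 * b - a)))).
  2: { intros t Ht. rewrite Rmin_left, Rmax_right in Ht by lra.
       apply p_dens_closed; lra. }
  apply RInt_gt_0; [exact HT | |].
  - intros t Ht. pose proof (exp_gap_div_pos a (2 * b) t Hab (proj1 Ht)).
    apply Rmult_lt_0_compat; [|assumption].
    apply Rmult_lt_0_compat; [assumption | nra].
  - intros t _. apply (ex_derive_continuous (V := R_NormedModule)).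
    auto_derive. lra.
Qed.

Lemma p_T_within (a b eta T t : R) : 0 <= t <= T ->
  p_T a b eta T t = p_dens a b eta t / p_det a b eta T.
Proof.
  intros Ht. unfold p_T. rewrite !Theta_nonneg by lra. unfold Rdiv. ring.
Qed.

Lemma p_T_outside (a b eta T t : R) : t < 0 \/ T < t -> p_T a b eta T t = 0.
Proof.
  intros [Ht | Ht]; unfold p_T; [rewrite (Theta_neg t) | rewrite (Theta_neg (T - t))];
    try lra; unfold Rdiv; ring.
Qed.

Definition overlap (T tau t : R) : R := Rmin T (t + tau) - Rmax 0 (t - tau).

Lemma overlap_ramps (T tau t : R) :
  overlap T tau t = (t + tau) - Rmax 0 (t - (T - tau)) - Rmax 0 (t - tau).
Proof.
  unfold overlap, Rmin, Rmax.
  destruct (Rle_dec T (t + tau)), (Rle_dec 0 (t - (T - tau))); lra.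
Qed.

Lemma dark_window_inside (c T tau t1 t2 : R) :
  Rmax 0 (t1 - tau) <= t2 <= Rmin T (t1 + tau) ->
  ind_close tau t1 t2 * c * d_T T t2 = c / T.
Proof.
  intros [Hlo Hhi].
  pose proof (Rle_trans _ _ _ (Rmax_l 0 (t1 - tau)) Hlo).
  pose proof (Rle_trans _ _ _ (Rmax_r 0 (t1 - tau)) Hlo).
  pose proof (Rle_trans _ _ _ Hhi (Rmin_l T (t1 + tau))).
  pose proof (Rle_trans _ _ _ Hhi (Rmin_r T (t1 + tau))).
  unfold ind_close, d_T. rewrite !Theta_nonneg by lra.
  destruct (Rle_dec (Rabs (t1 - t2)) tau) as [_ | Hfar].
  - unfold Rdiv. ring.
  - exfalso. apply Hfar, Rabs_le. lra.
Qed.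

Lemma dark_window_outside (c T tau t1 t2 : R) :
  t2 < Rmax 0 (t1 - tau) \/ Rmin T (t1 + tau) < t2 ->
  ind_close tau t1 t2 * c * d_T T t2 = 0.
Proof.
  intros Hout. unfold ind_close, d_T.
  destruct (Rle_dec (Rabs (t1 - t2)) tau) as [Hnear | _]; [|ring].
  pose proof (Rle_abs (t1 - t2)). pose proof (Rabs_maj2 (t1 - t2)).
  destruct Hout as [Hlo | Hhi].
  - assert (t2 < 0) by (unfold Rmax in Hlo; destruct (Rle_dec 0 (t1 - tau)); lra).
    rewrite (Theta_neg t2) by lra. ring.
  - assert (T < t2) by (unfold Rmin in Hhi; destruct (Rle_dec T (t1 + tau)); lra).
    rewrite (Theta_neg (T - t2)) by lra. ring.
Qed.

Lemma is_RInt_gen_dark_window (c T tau t1 : R) : 0 < T -> 0 <= tau -> 0 <= t1 <= T ->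
  is_RInt_gen (fun t2 => ind_close tau t1 t2 * c * d_T T t2)
    (Rbar_locally m_infty) (Rbar_locally p_infty) (c * overlap T tau t1 / T).
Proof.
  intros HT Htau Ht1.
  set (lo := Rmax 0 (t1 - tau)). set (hi := Rmin T (t1 + tau)).
  assert (Hlohi : lo <= hi).
  { unfold lo, hi, Rmin, Rmax.
    destruct (Rle_dec T (t1 + tau)), (Rle_dec 0 (t1 - tau)); lra. }
  apply (is_RInt_gen_compact_support _ lo hi).
  - intros t2 Ht2. apply dark_window_outside. now left.
  - intros t2 Ht2. apply dark_window_outside. now right.
  - apply (is_RInt_ext (fun _ => c / T)).
    + intros t2 Ht2. rewrite Rmin_left, Rmax_right in Ht2 by exact Hlohi.
      symmetry. apply dark_window_inside. fold lo hi. lra.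
    + replace (c * overlap T tau t1 / T) with ((hi - lo) * (c / T)).
      * apply (is_RInt_const (V := R_NormedModule)).
      * unfold overlap. fold lo hi. field. lra.
Qed.

Lemma is_RInt_gen_zero_fun (f : R -> R) : (forall x, f x = 0) ->
  is_RInt_gen f (Rbar_locally m_infty) (Rbar_locally p_infty) 0.
Proof.
  intros Hf. apply (is_RInt_gen_compact_support f 0 0); intros; try apply Hf.
  apply is_RInt_vanishing. intros; apply Hf.
Qed.

Lemma p_phdc_eq (a b eta T tau l : R) : 0 < T -> 0 <= tau ->
  is_RInt (fun t => p_T a b eta T t * overlap T tau t / T) 0 T l ->
  p_phdc a b eta T tau = l.
Proof.
  intros HT Htau Hl.
  assert (Hinner : forall t1,
    RInt_gen (fun t2 => ind_close tau t1 t2 * p_T a b eta T t1 * d_T T t2)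
      (Rbar_locally m_infty) (Rbar_locally p_infty)
    = p_T a b eta T t1 * overlap T tau t1 / T).
  { intros t1. apply is_RInt_gen_unique.
    destruct (Rle_lt_dec 0 t1), (Rle_lt_dec t1 T);
      [apply is_RInt_gen_dark_window; lra | ..];
      rewrite p_T_outside by lra; unfold Rdiv; rewrite !Rmult_0_l;
      apply is_RInt_gen_zero_fun; intros; ring. }
  unfold p_phdc. apply is_RInt_gen_unique, (is_RInt_gen_compact_support _ 0 T).
  - intros t1 Ht1. rewrite Hinner, p_T_outside by lra. unfold Rdiv; ring.
  - intros t1 Ht1. rewrite Hinner, p_T_outside by lra. unfold Rdiv; ring.
  - apply (is_RInt_ext _ _ _ _ _ (fun t1 _ => eq_sym (Hinner t1)) Hl).
Qed.

Definition exp_affine_primitive (k c t : R) : R :=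
  - exp (- (k * t)) * ((t - c) / k + / k ^ 2).

Lemma is_RInt_exp_affine (k c u v : R) : k <> 0 ->
  is_RInt (fun t => exp (- (k * t)) * (t - c)) u v
    (exp_affine_primitive k c v - exp_affine_primitive k c u).
Proof.
  intros Hk. apply (is_RInt_derive (V := R_CompleteNormedModule)); intros t _.
  - unfold exp_affine_primitive. auto_derive; [easy | unfold Rminus; field; exact Hk].
  - apply (ex_derive_continuous (V := R_NormedModule)). auto_derive. easy.
Qed.

Lemma is_RInt_exp_ramp (k c T : R) : k <> 0 -> 0 <= c <= T ->
  is_RInt (fun t => exp (- (k * t)) * Rmax 0 (t - c)) 0 T
    (exp_affine_primitive k c T - exp_affine_primitive k c c).
Proof.
  intros Hk Hc. rewrite <- (plus_zero_l (_ - _)).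
  apply (is_RInt_Chasles (V := R_NormedModule) _ 0 c T).
  - apply is_RInt_vanishing. intros t Ht. rewrite Rmin_left, Rmax_right in Ht by lra.
    rewrite Rmax_left by lra. ring.
  - apply (is_RInt_ext (fun t => exp (- (k * t)) * (t - c))).
    + intros t Ht. rewrite Rmin_left, Rmax_right in Ht by lra.
      rewrite (Rmax_right 0) by lra. reflexivity.
    + now apply is_RInt_exp_affine.
Qed.

Lemma is_RInt_exp_overlap (k T tau : R) : k <> 0 -> 0 <= tau <= T ->
  is_RInt (fun t => exp (- (k * t)) * overlap T tau t) 0 T
    ((1 + k * tau - exp (- (k * tau))
      + exp (- (k * T)) * (1 - k * tau - exp (k * tau))) / k ^ 2).
Proof.
  intros Hk Htau.
  set (F := exp_affine_primitive k).
  apply (is_RInt_ext (V := R_NormedModule) (fun t => exp (- (k * t)) * (t - - tau)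
           - exp (- (k * t)) * Rmax 0 (t - (T - tau))
           - exp (- (k * t)) * Rmax 0 (t - tau))).
  { intros t _. rewrite overlap_ramps. simpl. ring. }
  replace ((1 + k * tau - exp (- (k * tau))
      + exp (- (k * T)) * (1 - k * tau - exp (k * tau))) / k ^ 2)
    with ((F (- tau) T - F (- tau) 0) - (F (T - tau) T - F (T - tau) (T - tau))
                - (F tau T - F tau tau)).
  - apply (is_RInt_minus (V := R_NormedModule)); [apply (is_RInt_minus (V := R_NormedModule))|].
    + apply is_RInt_exp_affine; exact Hk.
    + apply is_RInt_exp_ramp; lra.
    + apply is_RInt_exp_ramp; lra.
  - assert (Hshift : exp (- (k * (T - tau))) = exp (- (k * T)) * exp (k * tau))
      by (rewrite <- exp_plus; f_equal; ring).
    assert (Hinv : exp (- (k * tau)) = / exp (k * tau)) by apply exp_Ropp.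
    assert (Hpos : exp (k * tau) <> 0) by apply Rgt_not_eq, exp_pos.
    unfold F, exp_affine_primitive.
    rewrite Rmult_0_r, Ropp_0, exp_0, Hshift, Hinv.
    field. lra.
Qed.

Theorem theorem8 (a b eta T tau : R) :
  0 < a -> 0 < b -> a <> 2 * b -> 0 < eta <= 1 -> 0 < T -> 0 < tau <= T ->
  p_phdc a b eta T tau * p_det a b eta T / eta =
    a / (2 * b * (a - 2 * b) * T) *
      (1 + 2 * b * tau - exp (- (2 * b * tau))
       + exp (- (2 * b * T)) * (1 - 2 * b * tau - exp (2 * b * tau)))
  - 2 * b / (a * (a - 2 * b) * T) *
      (1 + a * tau - exp (- (a * tau))
       + exp (- (a * T)) * (1 - a * tau - exp (a * tau))).
Proof.
  intros Ha Hb Hab Heta HT Htau.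
  pose proof (p_det_pos a b eta T Ha Hb Hab (proj1 Heta) HT) as HP.
  set (P := p_det a b eta T) in *.
  set (C := eta * (2 * a * b) / ((2 * b - a) * P * T)).
  eassert (Hint : is_RInt (fun t => p_T a b eta T t * overlap T tau t / T) 0 T
                    (C * (_ - _))).
  { apply (is_RInt_ext (V := R_NormedModule)
             (fun t => C * (exp (- (a * t)) * overlap T tau t
                            - exp (- (2 * b * t)) * overlap T tau t))).
    - intros t Ht. rewrite Rmin_left, Rmax_right in Ht by lra.
      rewrite p_T_within, p_dens_closed by lra. fold P. unfold C. simpl.
      field. lra.
    - apply (is_RInt_scal (V := R_NormedModule)), (is_RInt_minus (V := R_NormedModule));
        apply is_RInt_exp_overlap; lra. }
  rewrite (p_phdc_eq a b eta T tau _ HT (Rlt_le _ _ (proj1 Htau)) Hint).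
  unfold C. field. lra.
Qed.
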